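(* Let $X$ be a uniformly convex and uniformly smooth Banach space, $x\in X$, and $(x_k)\subset X$ a bounded sequence with $\liminf_k\|x_k-x\|>0$. Then $x_k\rightharpoondown x$ if and only if $(x_k-x)^*\rightharpoonup0$ weakly in $X^*$.
   Context: $x_k\rightharpoondown x$ (Δ-convergence) means: for every $y\in X$, $\limsup_{k\to\infty}(\|x_k-x\|-\|x_k-y\|)\le0$. For $z\in X\setminus\{0\}$, $z^*$ denotes the unique element of $X^*$ with $\|z^*\|=1$ and $\langle z^*,z\rangle=\|z\|$ (unique since $X^*$ is strictly convex); $(x_k-x)^*$ is defined for all large $k$. *)

From Stdlib Require Import Reals.
Open Scope R_scope.

Record NormedSpace := {
  carrier :> Type;
  vadd : carrier -> carrier -> carrier;
  vzero : carrier;
  vopp : carrier -> carrier;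
  vscal : R -> carrier -> carrier;
  vnorm : carrier -> R;
  vadd_assoc : forall x y z, vadd x (vadd y z) = vadd (vadd x y) z;
  vadd_comm : forall x y, vadd x y = vadd y x;
  vadd_0 : forall x, vadd x vzero = x;
  vadd_opp : forall x, vadd x (vopp x) = vzero;
  vscal_1 : forall x, vscal 1 x = x;
  vscal_assoc : forall a b x, vscal a (vscal b x) = vscal (a * b) x;
  vscal_distr_v : forall a x y, vscal a (vadd x y) = vadd (vscal a x) (vscal a y);
  vscal_distr_s : forall a b x, vscal (a + b) x = vadd (vscal a x) (vscal b x);
  vnorm_nonneg : forall x, 0 <= vnorm x;
  vnorm_eq0 : forall x, vnorm x = 0 -> x = vzero;
  vnorm_scal : forall a x, vnorm (vscal a x) = Rabs a * vnorm x;
  vnorm_triangle : forall x y, vnorm (vadd x y) <= vnorm x + vnorm y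
}.

Arguments vadd {n}. Arguments vzero {n}. Arguments vopp {n}.
Arguments vscal {n}. Arguments vnorm {n}.

Definition vsub {X : NormedSpace} (x y : X) : X := vadd x (vopp y).

Definition is_Banach (X : NormedSpace) : Prop :=
  forall u : nat -> X,
    (forall eps, 0 < eps -> exists N, forall m n, (m >= N)%nat -> (n >= N)%nat ->
        vnorm (vsub (u m) (u n)) < eps) ->
    exists l : X, forall eps, 0 < eps -> exists N, forall n, (n >= N)%nat ->
        vnorm (vsub (u n) l) < eps.

Definition uniformly_convex (X : NormedSpace) : Prop :=
  forall eps, 0 < eps <= 2 -> exists delta, 0 < delta /\
    forall x y : X, vnorm x <= 1 -> vnorm y <= 1 -> vnorm (vsub x y) >= eps ->
      vnorm (vscal (/2) (vadd x y)) <= 1 - delta.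

(* Uniform smoothness: rho_X(t)/t -> 0 as t -> 0+, where
   rho_X(t) = sup { (||x+ty|| + ||x-ty||)/2 - 1 : ||x|| = ||y|| = 1 }. *)
Definition uniformly_smooth (X : NormedSpace) : Prop :=
  forall eps, 0 < eps -> exists tau, 0 < tau /\
    forall t, 0 < t < tau -> forall x y : X, vnorm x = 1 -> vnorm y = 1 ->
      (vnorm (vadd x (vscal t y)) + vnorm (vsub x (vscal t y))) / 2 - 1 <= eps * t.

Definition is_linear {X : NormedSpace} (f : X -> R) : Prop :=
  (forall x y, f (vadd x y) = f x + f y) /\ (forall a x, f (vscal a x) = a * f x).

Definition in_dual {X : NormedSpace} (f : X -> R) : Prop :=
  is_linear f /\ exists M, forall x, Rabs (f x) <= M * vnorm x.

Definition dual_norm_is {X : NormedSpace} (f : X -> R) (r : R) : Prop :=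
  is_lub (fun s => exists x : X, vnorm x <= 1 /\ s = Rabs (f x)) r.

Definition dadd {X : NormedSpace} (f g : X -> R) : X -> R := fun x => f x + g x.
Definition dscal {X : NormedSpace} (a : R) (f : X -> R) : X -> R := fun x => a * f x.

Definition in_bidual {X : NormedSpace} (Psi : (X -> R) -> R) : Prop :=
  (forall f g, in_dual f -> in_dual g -> Psi (dadd f g) = Psi f + Psi g) /\
  (forall a f, in_dual f -> Psi (dscal a f) = a * Psi f) /\
  (exists M, forall f r, in_dual f -> dual_norm_is f r -> Rabs (Psi f) <= M * r).

Definition weakly_to_zero_dual {X : NormedSpace} (phi : nat -> X -> R) : Prop :=
  forall Psi, in_bidual Psi -> Un_cv (fun k => Psi (phi k)) 0.

Definition is_star {X : NormedSpace} (z : X) (f : X -> R) : Prop :=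
  in_dual f /\ dual_norm_is f 1 /\ f z = vnorm z.

Definition Delta_conv {X : NormedSpace} (xs : nat -> X) (x : X) : Prop :=
  forall y : X, forall eps, 0 < eps -> exists N, forall k, (k >= N)%nat ->
    vnorm (vsub (xs k) x) - vnorm (vsub (xs k) y) <= eps.

Definition bounded_seq {X : NormedSpace} (xs : nat -> X) : Prop :=
  exists M, forall k, vnorm (xs k) <= M.

Definition liminf_dist_pos {X : NormedSpace} (xs : nat -> X) (x : X) : Prop :=
  exists c, 0 < c /\ exists N, forall k, (k >= N)%nat -> c <= vnorm (vsub (xs k) x).

(* The implication from Delta-convergence uses uniform smoothness: a norm-one
   functional supporting v = x_k - x satisfies, for small t > 0,
   t (J_k z - e) <= |v| - |v - t z|, and Delta-convergence tested at
   y = x + t z makes the right-hand side eventually small, so J_k z -> 0 for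
   every z.  The converse only needs the evaluation at y - x, since
   |x_k - x| - |x_k - y| <= J_k (y - x).  Weak convergence in X^* and
   pointwise convergence agree because X is reflexive (Milman-Pettis): the
   dual of a uniformly smooth space is uniformly convex, so a maximising
   sequence for Psi in the dual ball converges to some f0 with Psi f0 = |Psi|;
   f0 attains its norm at some z0 by uniform convexity of X, and the dual norm
   has derivative g z0 at f0 in every direction g, which forces
   Psi g = |Psi| g z0. *)

From Stdlib Require Import Reals Lra Lia Classical ClassicalEpsilon IndefiniteDescription.
Open Scope R_scope.

Arguments vadd_assoc {n}. Arguments vadd_comm {n}. Arguments vadd_0 {n}.
Arguments vadd_opp {n}. Arguments vscal_1 {n}. Arguments vscal_assoc {n}.
Arguments vscal_distr_v {n}. Arguments vscal_distr_s {n}. Arguments vnorm_nonneg {n}.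
Arguments vnorm_eq0 {n}. Arguments vnorm_scal {n}. Arguments vnorm_triangle {n}.

Section NormedSpaceAlgebra.
Context {X : NormedSpace}.

Lemma vadd_0l (a : X) : vadd vzero a = a.
Proof. rewrite vadd_comm. apply vadd_0. Qed.

Lemma vadd_cancel_l (a b c : X) : vadd a b = vadd a c -> b = c.
Proof.
  intro H.
  transitivity (vadd (vadd (vopp a) a) b).
  { rewrite (vadd_comm (vopp a) a), vadd_opp, vadd_0l; reflexivity. }
  rewrite <- vadd_assoc, H, vadd_assoc, (vadd_comm (vopp a) a), vadd_opp, vadd_0l.
  reflexivity.
Qed.

Lemma vscal_0 (a : X) : vscal 0 a = vzero.
Proof.
  pose proof (vscal_distr_s 0 0 a) as H. rewrite Rplus_0_r in H.
  apply (vadd_cancel_l (vscal 0 a)). rewrite vadd_0. symmetry; exact H.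
Qed.

Lemma vopp_scal (a : X) : vopp a = vscal (-1) a.
Proof.
  apply (vadd_cancel_l a). rewrite vadd_opp, <- (vscal_0 a).
  replace 0 with (1 + -1) by ring.
  rewrite vscal_distr_s, vscal_1. reflexivity.
Qed.

Lemma vnorm_0 : vnorm (@vzero X) = 0.
Proof.
  assert (H : vnorm (vscal 0 (@vzero X)) = 0) by (rewrite vnorm_scal, Rabs_R0; ring).
  rewrite vscal_0 in H. exact H.
Qed.

Lemma vnorm_opp (a : X) : vnorm (vopp a) = vnorm a.
Proof. rewrite vopp_scal, vnorm_scal, Rabs_left by lra. ring. Qed.

Lemma vopp_add (a b : X) : vopp (vadd a b) = vadd (vopp a) (vopp b).
Proof. rewrite !vopp_scal, vscal_distr_v. reflexivity. Qed.

Lemma vopp_opp (a : X) : vopp (vopp a) = a.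
Proof. rewrite !vopp_scal, vscal_assoc. replace (-1 * -1) with 1 by ring. apply vscal_1. Qed.

Lemma vscal_opp c (a : X) : vscal c (vopp a) = vopp (vscal c a).
Proof. rewrite !vopp_scal, !vscal_assoc. f_equal. ring. Qed.

Lemma vsub_add (a b c : X) : vsub a (vadd b c) = vsub (vsub a b) c.
Proof. unfold vsub. rewrite vopp_add, vadd_assoc. reflexivity. Qed.

Lemma vnorm_le_sub (a b : X) : vnorm b <= vnorm a + vnorm (vsub a b).
Proof.
  assert (E : b = vadd a (vopp (vsub a b))).
  { unfold vsub. rewrite vopp_add, vopp_opp, vadd_assoc, vadd_opp, vadd_0l. reflexivity. }
  rewrite E at 1. eapply Rle_trans; [apply vnorm_triangle|]. rewrite vnorm_opp. lra.
Qed.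

Lemma vnorm_sub_scal_le (v z : X) t : vnorm (vsub v (vscal t z)) <= vnorm v + Rabs t * vnorm z.
Proof.
  unfold vsub. eapply Rle_trans; [apply vnorm_triangle|]. rewrite vnorm_opp, vnorm_scal. lra.
Qed.

Lemma vscal_sub_scal (v z : X) a b : vscal a (vsub v (vscal b z)) = vsub (vscal a v) (vscal (a * b) z).
Proof. unfold vsub. rewrite vscal_distr_v, vscal_opp, vscal_assoc. reflexivity. Qed.

Lemma vnorm_normalize (v : X) : 0 < vnorm v -> vnorm (vscal (/ vnorm v) v) = 1.
Proof.
  intro Hv. rewrite vnorm_scal, Rabs_right by (left; apply Rinv_0_lt_compat; lra).
  field. lra.
Qed.

End NormedSpaceAlgebra.

Section DualSpace.
Context {X : NormedSpace}.

Lemma linear_add (f : X -> R) a b : is_linear f -> f (vadd a b) = f a + f b.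
Proof. intro H. apply (proj1 H). Qed.

Lemma linear_scal (f : X -> R) c a : is_linear f -> f (vscal c a) = c * f a.
Proof. intro H. apply (proj2 H). Qed.

Lemma linear_0 (f : X -> R) : is_linear f -> f vzero = 0.
Proof. intro H. rewrite <- (vscal_0 (@vzero X)), linear_scal by exact H. ring. Qed.

Lemma linear_opp (f : X -> R) a : is_linear f -> f (vopp a) = - f a.
Proof. intro H. rewrite vopp_scal, linear_scal by exact H. ring. Qed.

Lemma linear_sub (f : X -> R) a b : is_linear f -> f (vsub a b) = f a - f b.
Proof. intro H. unfold vsub. rewrite linear_add, linear_opp by exact H. ring. Qed.

Lemma dual_norm_is_bound (f : X -> R) r : is_linear f -> dual_norm_is f r ->
  forall x, Rabs (f x) <= r * vnorm x.
Proof.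
  intros Hl [Hub _] x.
  destruct (Req_dec (vnorm x) 0) as [H0|H0].
  - apply vnorm_eq0 in H0. subst x. rewrite linear_0, vnorm_0, Rabs_R0 by exact Hl. lra.
  - assert (Hp : 0 < vnorm x) by (pose proof (vnorm_nonneg x); lra).
    assert (H1 : Rabs (f (vscal (/ vnorm x) x)) <= r).
    { apply Hub. exists (vscal (/ vnorm x) x). rewrite vnorm_normalize by exact Hp.
      split; [lra|reflexivity]. }
    rewrite linear_scal, Rabs_mult, Rabs_right in H1
      by (assumption || (left; apply Rinv_0_lt_compat; lra)).
    apply (Rmult_le_reg_l (/ vnorm x)); [apply Rinv_0_lt_compat; lra|].
    replace (/ vnorm x * (r * vnorm x)) with r by (field; lra). exact H1.
Qed.

Lemma dual_norm_is_exists (f : X -> R) : in_dual f -> exists r, dual_norm_is f r.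
Proof.
  intros [Hl [M HM]].
  destruct (completeness (fun s => exists x : X, vnorm x <= 1 /\ s = Rabs (f x))) as [r Hr];
    [| | exists r; exact Hr].
  - exists (Rabs M). intros s [x [Hx ->]]. eapply Rle_trans; [apply HM|].
    pose proof (vnorm_nonneg x). pose proof (Rle_abs M). pose proof (Rabs_pos M). nra.
  - exists (Rabs (f vzero)), vzero. rewrite vnorm_0. split; [lra|reflexivity].
Qed.

(* Meaningful only on [in_dual]; elsewhere an arbitrary real. *)
Definition dual_norm (f : X -> R) : R := epsilon (inhabits 0) (dual_norm_is f).

Lemma dual_normP (f : X -> R) : in_dual f -> dual_norm_is f (dual_norm f).
Proof. intro H. unfold dual_norm. apply epsilon_spec, dual_norm_is_exists, H. Qed.

Lemma dual_norm_is_eq (f : X -> R) r : in_dual f -> dual_norm_is f r -> dual_norm f = r.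
Proof. intros H Hr. eapply is_lub_u; [apply dual_normP, H | exact Hr]. Qed.

Lemma dual_norm_bound (f : X -> R) x : in_dual f -> Rabs (f x) <= dual_norm f * vnorm x.
Proof. intro H. apply dual_norm_is_bound; [apply H | apply dual_normP, H]. Qed.

Lemma dual_norm_ge0 (f : X -> R) : in_dual f -> 0 <= dual_norm f.
Proof.
  intro H. destruct (dual_normP f H) as [Hub _]. apply Hub. exists vzero.
  rewrite vnorm_0, linear_0, Rabs_R0 by apply H. split; [lra|reflexivity].
Qed.

Lemma dual_norm_le1_bound (f : X -> R) x : in_dual f -> dual_norm f <= 1 -> f x <= vnorm x.
Proof.
  intros H H1. pose proof (dual_norm_bound f x H). pose proof (Rle_abs (f x)).
  pose proof (vnorm_nonneg x). pose proof (dual_norm_ge0 f H). nra.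
Qed.

Lemma dual_norm_le (f : X -> R) a : in_dual f ->
  (forall x, vnorm x <= 1 -> f x <= a) -> dual_norm f <= a.
Proof.
  intros H Ha. destruct (dual_normP f H) as [_ Hl]. apply Hl.
  intros s [x [Hx ->]]. apply Rabs_le. split.
  - pose proof (Ha (vopp x)) as Ho. rewrite vnorm_opp, linear_opp in Ho by apply H.
    specialize (Ho Hx). lra.
  - apply Ha, Hx.
Qed.

Lemma dual_norm_approx (f : X -> R) eps : in_dual f -> 0 < eps ->
  exists x, vnorm x <= 1 /\ f x > dual_norm f - eps.
Proof.
  intros H He. apply NNPP. intro Hn. destruct (dual_normP f H) as [_ Hl].
  assert (dual_norm f <= dual_norm f - eps); [|lra]. apply Hl. intros s [x [Hx ->]].
  apply Rabs_le. split; apply Rnot_lt_le; intro; apply Hn.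
  - exists (vopp x). rewrite vnorm_opp, linear_opp by apply H. split; lra.
  - exists x. split; lra.
Qed.

Lemma dual_norm_approx_unit (f : X -> R) eps : in_dual f -> 0 < dual_norm f -> 0 < eps ->
  exists x, vnorm x = 1 /\ f x > dual_norm f - eps.
Proof.
  intros H Hp He.
  destruct (dual_norm_approx f (Rmin eps (dual_norm f)) H) as [x [Hx1 Hx2]];
    [apply Rmin_glb_lt; lra|].
  pose proof (Rmin_l eps (dual_norm f)). pose proof (Rmin_r eps (dual_norm f)).
  assert (Hxp : 0 < vnorm x).
  { destruct (Req_dec (vnorm x) 0) as [Hz|Hz]; [|pose proof (vnorm_nonneg x); lra].
    apply vnorm_eq0 in Hz. subst x. rewrite linear_0 in Hx2 by apply H. lra. }
  exists (vscal (/ vnorm x) x). split; [apply vnorm_normalize, Hxp|].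
  rewrite linear_scal by apply H.
  assert (f x <= / vnorm x * f x); [|lra].
  rewrite <- (Rmult_1_l (f x)) at 1. apply Rmult_le_compat_r; [lra|].
  rewrite <- Rinv_1. apply Rinv_le_contravar; lra.
Qed.

Lemma is_star_dual_norm (v : X) (f : X -> R) : is_star v f -> dual_norm f = 1.
Proof. intros [Hf [Hn _]]. apply dual_norm_is_eq; assumption. Qed.

Definition dsub (f g : X -> R) : X -> R := dadd f (dscal (-1) g).

Lemma in_dual_add (f g : X -> R) : in_dual f -> in_dual g -> in_dual (dadd f g).
Proof.
  intros [[Ha Hs] [M HM]] [[Ga Gs] [N HN]]. unfold dadd. split; [split|].
  - intros. rewrite Ha, Ga. ring.
  - intros. rewrite Hs, Gs. ring.
  - exists (M + N). intros x. eapply Rle_trans; [apply Rabs_triang|].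
    specialize (HM x). specialize (HN x). lra.
Qed.

Lemma in_dual_scal a (f : X -> R) : in_dual f -> in_dual (dscal a f).
Proof.
  intros [[Ha Hs] [M HM]]. unfold dscal. split; [split|].
  - intros. rewrite Ha. ring.
  - intros. rewrite Hs. ring.
  - exists (Rabs a * M). intros x. rewrite Rabs_mult, Rmult_assoc.
    apply Rmult_le_compat_l; [apply Rabs_pos | apply HM].
Qed.

Lemma in_dual_sub (f g : X -> R) : in_dual f -> in_dual g -> in_dual (dsub f g).
Proof. intros. apply in_dual_add; [|apply in_dual_scal]; assumption. Qed.

Lemma in_dual_zero : in_dual (fun _ : X => 0).
Proof. split; [split|]; [intros; ring | intros; ring |]. exists 0. intros. rewrite Rabs_R0. lra. Qed.

Lemma dual_norm_sub_bound (f g : X -> R) x : in_dual f -> in_dual g ->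
  Rabs (f x - g x) <= dual_norm (dsub f g) * vnorm x.
Proof.
  intros Hf Hg. replace (f x - g x) with (dsub f g x) by (unfold dsub, dadd, dscal; ring).
  apply dual_norm_bound, in_dual_sub; assumption.
Qed.

Lemma dual_norm_zero : dual_norm (fun _ : X => 0) = 0.
Proof.
  apply Rle_antisym; [apply dual_norm_le; [apply in_dual_zero | intros; lra] |].
  apply dual_norm_ge0, in_dual_zero.
Qed.

Lemma dual_norm_scal_le (f : X -> R) a : in_dual f -> 0 <= a ->
  dual_norm (dscal a f) <= a * dual_norm f.
Proof.
  intros Hf Ha. apply dual_norm_le; [apply in_dual_scal, Hf|]. intros x Hx. unfold dscal.
  pose proof (dual_norm_bound f x Hf). pose proof (Rle_abs (f x)).
  pose proof (dual_norm_ge0 f Hf). pose proof (vnorm_nonneg x).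
  assert (f x <= dual_norm f) by nra. nra.
Qed.

Lemma bidual_add (Psi : (X -> R) -> R) f g : in_bidual Psi -> in_dual f -> in_dual g ->
  Psi (dadd f g) = Psi f + Psi g.
Proof. intros [H _]. apply H. Qed.

Lemma bidual_scal (Psi : (X -> R) -> R) a f : in_bidual Psi -> in_dual f ->
  Psi (dscal a f) = a * Psi f.
Proof. intros [_ [H _]]. apply H. Qed.

Lemma bidual_sub (Psi : (X -> R) -> R) f g : in_bidual Psi -> in_dual f -> in_dual g ->
  Psi (dsub f g) = Psi f - Psi g.
Proof.
  intros. unfold dsub. rewrite bidual_add, bidual_scal by auto using in_dual_scal. ring.
Qed.

Lemma bidual_bound (Psi : (X -> R) -> R) : in_bidual Psi ->
  exists M, 0 <= M /\ forall f, in_dual f -> Rabs (Psi f) <= M * dual_norm f.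
Proof.
  intros [_ [_ [M HM]]]. exists (Rabs M). split; [apply Rabs_pos|].
  intros f Hf. eapply Rle_trans; [apply HM; [exact Hf | apply dual_normP, Hf]|].
  apply Rmult_le_compat_r; [apply dual_norm_ge0, Hf | apply Rle_abs].
Qed.

Lemma in_bidual_eval (y : X) : in_bidual (fun f : X -> R => f y).
Proof.
  split; [|split]; [reflexivity | reflexivity |].
  exists (vnorm y). intros f r Hf Hr.
  pose proof (dual_norm_is_bound f r (proj1 Hf) Hr y). lra.
Qed.

End DualSpace.

Definition reflexive (X : NormedSpace) : Prop :=
  forall Psi, in_bidual Psi -> exists z : X, forall f, in_dual f -> Psi f = f z.

Lemma eventually_inv_INR_lt (a : R) : 0 < a ->
  exists N : nat, forall n, (n >= N)%nat -> / (INR n + 1) < a.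
Proof.
  intro Ha. destruct (archimed_cor1 a Ha) as [N [HN HN0]]. exists N. intros n Hn.
  apply le_INR in Hn. apply lt_INR in HN0. simpl in HN0.
  eapply Rle_lt_trans; [|exact HN]. apply Rinv_le_contravar; lra.
Qed.

Lemma inv_INR_succ_pos (n : nat) : 0 < / (INR n + 1).
Proof. pose proof (pos_INR n). apply Rinv_0_lt_compat. lra. Qed.

Lemma Un_cv_const (c : R) : Un_cv (fun _ => c) c.
Proof. intros eps He. exists 0%nat. intros. unfold R_dist. rewrite Rminus_diag, Rabs_R0. exact He. Qed.

Lemma Un_cv_le_eventually (u : nat -> R) l a N :
  Un_cv u l -> (forall n, (n >= N)%nat -> u n <= a) -> l <= a.
Proof.
  intros Hu Ha. apply Rnot_lt_le. intro Hl.
  destruct (Hu (l - a)) as [N1 HN1]; [lra|].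
  specialize (HN1 (max N N1) (Nat.le_max_r _ _)). specialize (Ha (max N N1) (Nat.le_max_l _ _)).
  unfold R_dist in HN1. apply Rabs_def2 in HN1. lra.
Qed.

Section UniformConvexity.
Context {X : NormedSpace}.

Lemma uniformly_convex_close (Hconv : uniformly_convex X) (f : X -> R) :
  in_dual f -> dual_norm f <= 1 -> forall eps, 0 < eps -> exists delta, 0 < delta /\
  forall a b, vnorm a <= 1 -> vnorm b <= 1 -> f a + f b > 2 - delta -> vnorm (vsub a b) < eps.
Proof.
  intros Hf H1 eps He. set (e := Rmin eps 2).
  assert (e <= eps) by apply Rmin_l. assert (e <= 2) by apply Rmin_r.
  assert (0 < e) by (apply Rmin_glb_lt; lra).
  destruct (Hconv e ltac:(lra)) as [d [Hd Hc]].
  exists (2 * d). split; [lra|]. intros a b Ha Hb Hab.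
  apply Rnot_le_lt. intro Hn.
  pose proof (Hc a b Ha Hb ltac:(lra)) as Hm.
  pose proof (dual_norm_le1_bound f (vscal (/2) (vadd a b)) Hf H1) as Hq.
  rewrite linear_scal, linear_add in Hq by apply Hf. lra.
Qed.

(* Testing [f + g] and [f - g] at [y + t x] and [y - t x], with [y] almost
   norming [f + g] and [x] almost norming [f - g], against the modulus of
   smoothness. *)
Lemma uniformly_smooth_dual_convex (Hsmooth : uniformly_smooth X) :
  forall eps, 0 < eps -> exists delta, 0 < delta /\
  forall f g : X -> R, in_dual f -> in_dual g -> dual_norm f <= 1 -> dual_norm g <= 1 ->
    dual_norm (dadd f g) > 2 - delta -> dual_norm (dsub f g) < eps.
Proof.
  intros eps He. destruct (Hsmooth (eps / 8) ltac:(lra)) as [tau [Htau Hs]].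
  set (t := tau / 2). set (d := Rmin 1 (t * eps / 4)).
  assert (d <= 1) by apply Rmin_l. assert (d <= t * eps / 4) by apply Rmin_r.
  assert (0 < t) by (unfold t; lra).
  assert (0 < d) by (apply Rmin_glb_lt; nra).
  exists d. split; [lra|]. intros f g Hf Hg Hf1 Hg1 Hfg.
  apply Rnot_le_lt. intro Hn.
  destruct (dual_norm_approx_unit (dadd f g) (dual_norm (dadd f g) - (2 - d)))
    as [y [Hy Hy2]]; [apply in_dual_add; assumption | lra | lra |].
  destruct (dual_norm_approx_unit (dsub f g) (eps / 2)) as [x [Hx Hx2]];
    [apply in_dual_sub; assumption | lra | lra |].
  change ((dadd f g) y) with (f y + g y) in Hy2.
  change ((dsub f g) x) with (f x + -1 * g x) in Hx2.
  pose proof (Hs t ltac:(unfold t; lra) y x Hy Hx) as Hst.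
  pose proof (dual_norm_le1_bound f (vadd y (vscal t x)) Hf Hf1) as Q1.
  pose proof (dual_norm_le1_bound g (vsub y (vscal t x)) Hg Hg1) as Q2.
  rewrite linear_add, linear_scal in Q1 by apply Hf.
  rewrite linear_sub, linear_scal in Q2 by apply Hg.
  assert (t * (f x - g x) >= t * (eps / 2)) by (apply Rmult_ge_compat_l; lra).
  lra.
Qed.

End UniformConvexity.

Section Reflexivity.
Context {X : NormedSpace}.

Definition dual_cauchy (fs : nat -> X -> R) : Prop :=
  forall eps, 0 < eps -> exists N, forall n m, (n >= N)%nat -> (m >= N)%nat ->
    dual_norm (dsub (fs n) (fs m)) < eps.

Lemma dual_cauchy_pointwise (fs : nat -> X -> R) : (forall n, in_dual (fs n)) ->
  dual_cauchy fs -> forall x, exists l, Un_cv (fun n => fs n x) l.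
Proof.
  intros Hd Hcau x. destruct (R_complete (fun n => fs n x)) as [l Hl]; [|exists l; exact Hl].
  intros eps He. pose proof (vnorm_nonneg x).
  destruct (Hcau (eps / (vnorm x + 1))) as [N HN]; [apply Rdiv_lt_0_compat; lra|].
  exists N. intros n m Hn Hm. unfold R_dist. specialize (HN n m Hn Hm).
  pose proof (dual_norm_sub_bound (fs n) (fs m) x (Hd n) (Hd m)).
  pose proof (dual_norm_ge0 _ (in_dual_sub _ _ (Hd n) (Hd m))).
  assert (dual_norm (dsub (fs n) (fs m)) * (vnorm x + 1) < eps).
  { replace eps with (eps / (vnorm x + 1) * (vnorm x + 1)) by (field; lra).
    apply Rmult_lt_compat_r; lra. }
  nra.
Qed.

Lemma pointwise_limit_linear (fs : nat -> X -> R) (f : X -> R) :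
  (forall n, is_linear (fs n)) -> (forall x, Un_cv (fun n => fs n x) (f x)) -> is_linear f.
Proof.
  intros Hl Hf. split.
  - intros a b. apply (UL_sequence (fun n => fs n (vadd a b))); [apply Hf|].
    apply (Un_cv_ext (fun n => fs n a + fs n b)).
    + intro n. symmetry. apply linear_add, Hl.
    + apply CV_plus; apply Hf.
  - intros c a. apply (UL_sequence (fun n => fs n (vscal c a))); [apply Hf|].
    apply (Un_cv_ext (fun n => c * fs n a)).
    + intro n. symmetry. apply linear_scal, Hl.
    + apply CV_mult; [apply Un_cv_const | apply Hf].
Qed.

Lemma dual_cauchy_limit (fs : nat -> X -> R) : (forall n, in_dual (fs n)) ->
  (forall n, dual_norm (fs n) <= 1) -> dual_cauchy fs ->
  exists f, in_dual f /\ dual_norm f <= 1 /\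
    forall eps, 0 < eps -> exists N, forall n, (n >= N)%nat -> dual_norm (dsub (fs n) f) <= eps.
Proof.
  intros Hd H1 Hcau.
  destruct (functional_choice _ (dual_cauchy_pointwise fs Hd Hcau)) as [f Hf].
  assert (Hl : is_linear f) by (apply (pointwise_limit_linear fs); [intro n; apply Hd | exact Hf]).
  assert (Hle : forall x, f x <= vnorm x).
  { intro x. apply (Un_cv_le_eventually _ _ _ 0%nat (Hf x)). intros n _.
    apply dual_norm_le1_bound; [apply Hd | apply H1]. }
  assert (Hfd : in_dual f).
  { split; [exact Hl|]. exists 1. intro x. rewrite Rmult_1_l. apply Rabs_le. split.
    - pose proof (Hle (vopp x)) as H. rewrite linear_opp, vnorm_opp in H by exact Hl. lra.
    - apply Hle. }
  exists f. split; [exact Hfd|]. split.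
  { apply dual_norm_le; [exact Hfd|]. intros x Hx. pose proof (Hle x). lra. }
  intros eps He. destruct (Hcau eps He) as [N HN]. exists N. intros n Hn.
  apply dual_norm_le; [apply in_dual_sub; [apply Hd | exact Hfd]|]. intros x Hx.
  replace (dsub (fs n) f x) with (fs n x - f x) by (unfold dsub, dadd, dscal; ring).
  apply (Un_cv_le_eventually (fun m => fs n x - fs m x) _ _ N);
    [apply CV_minus; [apply Un_cv_const | apply Hf]|].
  intros m Hm. specialize (HN n m Hn Hm).
  pose proof (dual_norm_sub_bound (fs n) (fs m) x (Hd n) (Hd m)).
  pose proof (Rle_abs (fs n x - fs m x)).
  pose proof (dual_norm_ge0 _ (in_dual_sub _ _ (Hd n) (Hd m))). pose proof (vnorm_nonneg x).
  nra.
Qed.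

Lemma bidual_norm (Psi : (X -> R) -> R) : in_bidual Psi ->
  exists L, 0 <= L /\ (forall h, in_dual h -> Psi h <= L * dual_norm h) /\
    forall eps, 0 < eps -> exists f, in_dual f /\ dual_norm f <= 1 /\ Psi f > L - eps.
Proof.
  intro HP. destruct (bidual_bound Psi HP) as [M [HM0 HM]].
  set (E := fun s => exists f, in_dual f /\ dual_norm f <= 1 /\ s = Psi f).
  assert (HE0 : E 0).
  { exists (fun _ => 0). split; [apply in_dual_zero|]. rewrite dual_norm_zero. split; [lra|].
    pose proof (HM _ in_dual_zero) as H. rewrite dual_norm_zero, Rmult_0_r in H.
    pose proof (Rle_abs (Psi (fun _ : X => 0))). pose proof (Rle_abs (- Psi (fun _ : X => 0))).
    rewrite Rabs_Ropp in *. lra. }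
  destruct (completeness E) as [L [HLu HLl]]; [| exists 0; exact HE0 |].
  { exists M. intros s [f [Hf [H1 ->]]]. pose proof (HM f Hf). pose proof (Rle_abs (Psi f)).
    pose proof (dual_norm_ge0 f Hf). nra. }
  exists L. split; [apply HLu, HE0|]. split.
  - intros h Hh. destruct (Req_dec (dual_norm h) 0) as [Hz|Hz].
    + pose proof (HM h Hh) as H. rewrite Hz, Rmult_0_r in H. rewrite Hz, Rmult_0_r.
      pose proof (Rle_abs (Psi h)). lra.
    + pose proof (dual_norm_ge0 h Hh). assert (Hp : 0 < dual_norm h) by lra.
      assert (H1 : Psi (dscal (/ dual_norm h) h) <= L).
      { apply HLu. exists (dscal (/ dual_norm h) h). split; [apply in_dual_scal, Hh|].
        split; [|reflexivity].
        eapply Rle_trans; [apply dual_norm_scal_le; [exact Hh | left; apply Rinv_0_lt_compat; lra]|].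
        rewrite Rinv_l by lra. lra. }
      rewrite bidual_scal in H1 by auto.
      replace (Psi h) with (dual_norm h * (/ dual_norm h * Psi h)) by (field; lra).
      rewrite (Rmult_comm L). apply Rmult_le_compat_l; lra.
  - intros eps He. apply NNPP. intro Hn.
    assert (L <= L - eps); [|lra]. apply HLl. intros s [f [Hf [H1 ->]]].
    apply Rnot_lt_le. intro. apply Hn. exists f. split; [|split]; assumption.
Qed.

Lemma bidual_maximizer (Hsmooth : uniformly_smooth X) (Psi : (X -> R) -> R) L :
  in_bidual Psi -> 0 < L -> (forall h, in_dual h -> Psi h <= L * dual_norm h) ->
  (forall eps, 0 < eps -> exists f, in_dual f /\ dual_norm f <= 1 /\ Psi f > L - eps) ->
  exists f, in_dual f /\ dual_norm f <= 1 /\ Psi f = L.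
Proof.
  intros HP HL HPL Happrox.
  destruct (functional_choice
              (fun (n : nat) f => in_dual f /\ dual_norm f <= 1 /\ Psi f > L - / (INR n + 1)))
    as [fs Hfs]; [intro n; apply Happrox, inv_INR_succ_pos|].
  assert (Hd : forall n, in_dual (fs n)) by (intro n; apply Hfs).
  (* [Psi (fs n + fs m)] is close to [2 L], so [fs n + fs m] has norm close to 2. *)
  assert (Hcau : dual_cauchy fs).
  { intros eps He. destruct (uniformly_smooth_dual_convex Hsmooth eps He) as [d [Hd0 Hu]].
    destruct (eventually_inv_INR_lt (d * L / 2)) as [N HN]; [nra|].
    exists N. intros n m Hn Hm. apply Hu; try apply Hfs.
    pose proof (HPL _ (in_dual_add _ _ (Hd n) (Hd m))) as Q. rewrite bidual_add in Q by auto.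
    pose proof (proj2 (proj2 (Hfs n))). pose proof (proj2 (proj2 (Hfs m))).
    pose proof (HN n Hn). pose proof (HN m Hm).
    apply (Rmult_lt_reg_l L); lra. }
  destruct (dual_cauchy_limit fs Hd (fun n => proj1 (proj2 (Hfs n))) Hcau)
    as [f [Hf [Hf1 Hunif]]].
  exists f. split; [exact Hf | split; [exact Hf1|]].
  destruct (bidual_bound Psi HP) as [M [HM0 HM]].
  apply Rle_antisym.
  - pose proof (HPL f Hf). pose proof (dual_norm_ge0 f Hf). nra.
  - apply Rnot_lt_le; intro Hlt. set (e := L - Psi f).
    destruct (Hunif (e / (2 * (M + 1)))) as [N1 HN1]; [apply Rdiv_lt_0_compat; unfold e; lra|].
    destruct (eventually_inv_INR_lt (e / 2)) as [N2 HN2]; [unfold e; lra|].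
    set (n := max N1 N2).
    specialize (HN1 n (Nat.le_max_l _ _)). specialize (HN2 n (Nat.le_max_r _ _)).
    pose proof (proj2 (proj2 (Hfs n))) as Q1.
    pose proof (HM _ (in_dual_sub _ _ (Hd n) Hf)) as Q2. rewrite bidual_sub in Q2 by auto.
    pose proof (Rle_abs (Psi (fs n) - Psi f)).
    assert (M * dual_norm (dsub (fs n) f) <= M * (e / (2 * (M + 1))))
      by (apply Rmult_le_compat_l; lra).
    assert (M * (e / (2 * (M + 1))) <= e / 2).
    { replace (M * (e / (2 * (M + 1)))) with (e / 2 * (M / (M + 1))) by (field; lra).
      assert (M / (M + 1) <= 1).
      { apply (Rmult_le_reg_r (M + 1)); [lra|].
        unfold Rdiv. rewrite Rmult_assoc, Rinv_l by lra. lra. }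
      assert (0 <= e / 2) by (unfold e; lra). nra. }
    unfold e in *. lra.
Qed.

Lemma dual_norm_attained (HB : is_Banach X) (Hconv : uniformly_convex X) (f : X -> R) :
  in_dual f -> dual_norm f = 1 -> exists z, vnorm z <= 1 /\ f z = 1.
Proof.
  intros Hf Hf1.
  destruct (functional_choice (fun (n : nat) y => vnorm y <= 1 /\ f y > 1 - / (INR n + 1)))
    as [ys Hys].
  { intro n. destruct (dual_norm_approx f (/ (INR n + 1)) Hf (inv_INR_succ_pos n)) as [y Hy].
    rewrite Hf1 in Hy. exists y. exact Hy. }
  (* A maximising sequence for [f] in the unit ball is Cauchy by uniform convexity. *)
  destruct (HB ys) as [z Hz].
  { intros eps He.
    destruct (uniformly_convex_close Hconv f Hf (Req_le _ _ Hf1) eps He) as [d [Hd Hu]].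
    destruct (eventually_inv_INR_lt (d / 2)) as [N HN]; [lra|]. exists N. intros m n Hm Hn.
    apply Hu; [apply (Hys m) | apply (Hys n) |].
    pose proof (proj2 (Hys m)). pose proof (proj2 (Hys n)).
    pose proof (HN m Hm). pose proof (HN n Hn). lra. }
  assert (Hle : forall eps, 0 < eps ->
            exists n, vnorm (vsub (ys n) z) < eps /\ / (INR n + 1) < eps).
  { intros eps He. destruct (Hz eps He) as [N1 HN1].
    destruct (eventually_inv_INR_lt eps He) as [N2 HN2].
    exists (max N1 N2). split; [apply HN1 | apply HN2]; lia. }
  assert (Hz1 : vnorm z <= 1).
  { apply Rnot_lt_le; intro Hlt. destruct (Hle (vnorm z - 1)) as [n [Hn _]]; [lra|].
    pose proof (vnorm_le_sub (ys n) z). pose proof (proj1 (Hys n)). lra. }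
  exists z. split; [exact Hz1|].
  apply Rle_antisym; [pose proof (dual_norm_le1_bound f z Hf (Req_le _ _ Hf1)); lra|].
  apply Rnot_lt_le; intro Hlt. destruct (Hle ((1 - f z) / 2)) as [n [Hn1 Hn2]]; [lra|].
  pose proof (proj2 (Hys n)).
  pose proof (dual_norm_le1_bound f (vsub (ys n) z) Hf (Req_le _ _ Hf1)) as Q.
  rewrite linear_sub in Q by apply Hf. lra.
Qed.

(* Points almost norming [f] are close to [z], so on them [g] is close to [g z];
   elsewhere [f] stays below [1 - d], which absorbs [t g]. *)
Lemma dual_norm_add_scal_le (Hconv : uniformly_convex X) (f g : X -> R) (z : X) eta :
  in_dual f -> dual_norm f <= 1 -> vnorm z <= 1 -> f z = 1 -> in_dual g -> 0 < eta ->
  exists t, 0 < t /\ dual_norm (dadd f (dscal t g)) <= 1 + t * (g z + eta).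
Proof.
  intros Hf Hf1 Hz Hfz Hg Heta. set (G := dual_norm g).
  assert (HG : 0 <= G) by apply (dual_norm_ge0 g Hg).
  assert (HgG : forall y, Rabs (g y) <= G * vnorm y) by (intro y; apply dual_norm_bound, Hg).
  destruct (uniformly_convex_close Hconv f Hf Hf1 (eta / (G + 1))) as [d [Hd Hu]];
    [apply Rdiv_lt_0_compat; lra|].
  set (t := d / (2 * G + 1)).
  assert (Ht : 0 < t) by (apply Rdiv_lt_0_compat; lra).
  assert (Htd : t * (2 * G + 1) = d) by (unfold t; field; lra).
  exists t. split; [exact Ht|].
  apply dual_norm_le; [apply in_dual_add; [|apply in_dual_scal]; assumption|].
  intros x Hx. change (dadd f (dscal t g) x) with (f x + t * g x).
  pose proof (dual_norm_le1_bound f x Hf Hf1).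
  assert (Hgx : g x <= G).
  { pose proof (HgG x). pose proof (Rle_abs (g x)). pose proof (vnorm_nonneg x). nra. }
  assert (Hgz : - G <= g z).
  { pose proof (HgG (vopp z)) as Q. rewrite linear_opp, vnorm_opp in Q by apply Hg.
    pose proof (Rle_abs (- g z)). pose proof (vnorm_nonneg z). nra. }
  destruct (Rlt_or_le (2 - d) (f x + f z)) as [Hc|Hc].
  - pose proof (Hu x z Hx Hz Hc) as Hxz.
    pose proof (HgG (vsub x z)) as Q. rewrite linear_sub in Q by apply Hg.
    pose proof (Rle_abs (g x - g z)).
    assert (G * vnorm (vsub x z) <= G * (eta / (G + 1))) by (apply Rmult_le_compat_l; lra).
    assert (G * (eta / (G + 1)) <= eta).
    { apply (Rmult_le_reg_r (G + 1)); [lra|]. unfold Rdiv.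
      rewrite Rmult_assoc, Rmult_assoc, Rinv_l by lra. nra. }
    assert (t * g x <= t * (g z + eta)) by (apply Rmult_le_compat_l; lra).
    lra.
  - assert (t * g x <= t * G) by (apply Rmult_le_compat_l; lra).
    assert (t * - G <= t * g z) by (apply Rmult_le_compat_l; lra).
    assert (0 <= t * eta) by nra.
    lra.
Qed.

Lemma bidual_eq_eval (Hconv : uniformly_convex X) (Psi : (X -> R) -> R) L (f : X -> R) (z : X) :
  in_bidual Psi -> 0 < L -> (forall h, in_dual h -> Psi h <= L * dual_norm h) ->
  in_dual f -> dual_norm f <= 1 -> Psi f = L -> vnorm z <= 1 -> f z = 1 ->
  forall g, in_dual g -> Psi g = L * g z.
Proof.
  intros HP HL HPL Hf Hf1 HPf Hz Hfz.
  assert (Hle : forall g, in_dual g -> Psi g <= L * g z).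
  { intros g Hg. apply Rnot_lt_le; intro Hlt.
    set (eta := (Psi g - L * g z) / (2 * L)).
    assert (Heta : 0 < eta) by (apply Rdiv_lt_0_compat; lra).
    destruct (dual_norm_add_scal_le Hconv f g z eta Hf Hf1 Hz Hfz Hg Heta) as [t [Ht Hdn]].
    pose proof (HPL _ (in_dual_add _ _ Hf (in_dual_scal t g Hg))) as Q.
    rewrite bidual_add, bidual_scal, HPf in Q by auto using in_dual_scal.
    assert (L * dual_norm (dadd f (dscal t g)) <= L * (1 + t * (g z + eta)))
      by (apply Rmult_le_compat_l; lra).
    assert (Psi g <= L * g z + L * eta) by (apply (Rmult_le_reg_l t); nra).
    assert (L * eta = (Psi g - L * g z) / 2) by (unfold eta; field; lra).
    lra. }
  intros g Hg. apply Rle_antisym; [apply Hle, Hg|].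
  pose proof (Hle (dscal (-1) g) (in_dual_scal _ _ Hg)) as H.
  rewrite bidual_scal in H by auto. unfold dscal in H. lra.
Qed.

End Reflexivity.

Theorem uniformly_convex_smooth_reflexive (X : NormedSpace) :
  is_Banach X -> uniformly_convex X -> uniformly_smooth X -> reflexive X.
Proof.
  intros HB Hconv Hsmooth Psi HP.
  destruct (bidual_norm Psi HP) as [L [HL0 [HPL Happrox]]].
  destruct (Req_dec L 0) as [HL|HL].
  { exists vzero. intros f Hf. rewrite linear_0 by apply Hf.
    pose proof (HPL f Hf) as Hpos. pose proof (HPL _ (in_dual_scal (-1) f Hf)) as Hneg.
    rewrite bidual_scal in Hneg by auto. rewrite HL in *. lra. }
  destruct (bidual_maximizer Hsmooth Psi L HP ltac:(lra) HPL Happrox) as [f [Hf [Hf1 HPf]]].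
  assert (Hfn : dual_norm f = 1).
  { apply Rle_antisym; [exact Hf1|]. pose proof (HPL f Hf). apply (Rmult_le_reg_l L); lra. }
  destruct (dual_norm_attained HB Hconv f Hf Hfn) as [z [Hz Hfz]].
  exists (vscal L z). intros g Hg. rewrite linear_scal by apply Hg.
  apply (bidual_eq_eval Hconv Psi L f z); auto; lra.
Qed.

Section SupportFunctionals.
Context {X : NormedSpace}.

(* Uniform smoothness at the unit vectors [v / |v|] and [z / |z|], rescaled;
   the lower bound [c] on [|v|] makes the step [t] independent of [v]. *)
Lemma uniformly_smooth_support_slope (Hsmooth : uniformly_smooth X) (z : X) c e :
  0 < c -> 0 < e -> exists t, 0 < t /\ forall (J : X -> R) v, in_dual J -> dual_norm J <= 1 ->
    J v = vnorm v -> c <= vnorm v -> t * (J z - e) <= vnorm v - vnorm (vsub v (vscal t z)).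
Proof.
  intros Hc He. destruct (Req_dec (vnorm z) 0) as [Hz|Hz].
  { exists 1. split; [lra|]. intros J v HJ HJ1 HJv Hcv.
    pose proof (vnorm_sub_scal_le v z 1). pose proof (dual_norm_le1_bound J z HJ HJ1).
    rewrite Hz, Rabs_R1 in *. lra. }
  assert (Hm : 0 < vnorm z) by (pose proof (vnorm_nonneg z); lra). set (m := vnorm z) in *.
  destruct (Hsmooth (e / (2 * m))) as [tau [Htau Hs]]; [apply Rdiv_lt_0_compat; lra|].
  exists (tau * c / (2 * m)). split; [apply Rdiv_lt_0_compat; nra|].
  intros J v HJ HJ1 HJv Hcv. set (t := tau * c / (2 * m)). set (n := vnorm v) in *.
  assert (Hn : 0 < n) by lra.
  set (s := t * m / n).
  assert (Hs0 : 0 < s) by (unfold s, t; apply Rdiv_lt_0_compat; [apply Rmult_lt_0_compat|];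
    [apply Rdiv_lt_0_compat; nra | lra | lra]).
  assert (Hstau : s < tau).
  { unfold s, t. replace (tau * c / (2 * m) * m / n) with (tau / 2 * (c / n)) by (field; lra).
    assert (c / n <= 1).
    { apply (Rmult_le_reg_r n); [lra|]. unfold Rdiv. rewrite Rmult_assoc, Rinv_l by lra. lra. }
    assert (0 <= c / n) by (apply Rlt_le, Rdiv_lt_0_compat; lra). nra. }
  set (u := vscal (/ n) v). set (w := vscal (/ m) z).
  pose proof (Hs s (conj Hs0 Hstau) u w (vnorm_normalize v Hn) (vnorm_normalize z Hm)) as Hsm.
  assert (Hplus : 1 + s / m * J z <= vnorm (vadd u (vscal s w))).
  { eapply Rle_trans; [|apply (dual_norm_le1_bound J _ HJ HJ1)].
    unfold u, w. rewrite linear_add, !linear_scal, HJv by apply HJ. fold n.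
    replace (/ n * n) with 1 by (field; lra). unfold Rdiv. lra. }
  assert (Hminus : vnorm (vsub u (vscal s w)) = / n * vnorm (vsub v (vscal t z))).
  { replace (vsub u (vscal s w)) with (vscal (/ n) (vsub v (vscal t z))).
    - rewrite vnorm_scal, Rabs_right by (left; apply Rinv_0_lt_compat; lra). reflexivity.
    - unfold u, w. rewrite vscal_sub_scal, vscal_assoc.
      replace (s * / m) with (/ n * t) by (unfold s; field; lra). reflexivity. }
  set (D := vnorm (vsub v (vscal t z))) in *.
  assert (Hst : n * (s / m) = t) by (unfold s; field; lra).
  assert (Hest : n * (2 * (e / (2 * m) * s)) = e * t) by (rewrite <- Hst; field; lra).
  assert (/ n * D <= 1 + 2 * (e / (2 * m) * s) - s / m * J z) by lra.
  assert (n * (/ n * D) <= n * (1 + 2 * (e / (2 * m) * s) - s / m * J z))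
    by (apply Rmult_le_compat_l; lra).
  replace (n * (/ n * D)) with D in * by (field; lra).
  nra.
Qed.

Lemma Delta_conv_support_vanish (Hsmooth : uniformly_smooth X) (x : X) (xs : nat -> X)
  (J : nat -> X -> R) : liminf_dist_pos xs x ->
  (exists N, forall k, (k >= N)%nat -> is_star (vsub (xs k) x) (J k)) ->
  Delta_conv xs x -> forall z, Un_cv (fun k => J k z) 0.
Proof.
  intros [c [Hc [N0 HN0]]] [N1 HN1] HD z eps Heps. set (e := eps / 4).
  destruct (uniformly_smooth_support_slope Hsmooth z c e Hc ltac:(unfold e; lra)) as [t1 [Ht1 H1]].
  destruct (uniformly_smooth_support_slope Hsmooth (vopp z) c e Hc ltac:(unfold e; lra))
    as [t2 [Ht2 H2]].
  destruct (HD (vadd x (vscal t1 z)) (e * t1) ltac:(unfold e; nra)) as [N2 HN2].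
  destruct (HD (vadd x (vscal t2 (vopp z))) (e * t2) ltac:(unfold e; nra)) as [N3 HN3].
  exists (max (max N0 N1) (max N2 N3)). intros k Hk.
  pose proof (HN1 k ltac:(lia)) as Hstar.
  pose proof (Req_le _ _ (is_star_dual_norm _ _ Hstar)) as HJ1. destruct Hstar as [HJd [_ HJv]].
  specialize (HN0 k ltac:(lia)). specialize (HN2 k ltac:(lia)). specialize (HN3 k ltac:(lia)).
  rewrite vsub_add in HN2, HN3.
  pose proof (H1 (J k) _ HJd HJ1 HJv HN0) as Q1.
  pose proof (H2 (J k) _ HJd HJ1 HJv HN0) as Q2. rewrite linear_opp in Q2 by apply HJd.
  assert (J k z - e <= e) by (apply (Rmult_le_reg_l t1); lra).
  assert (- J k z - e <= e) by (apply (Rmult_le_reg_l t2); lra).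
  unfold R_dist. rewrite Rminus_0_r. apply Rabs_def1; unfold e in *; lra.
Qed.

(* [|x_k - x| - |x_k - y| <= J_k (x_k - x) - J_k (x_k - y) = J_k (y - x)]. *)
Lemma support_vanish_Delta_conv (x : X) (xs : nat -> X) (J : nat -> X -> R) :
  (exists N, forall k, (k >= N)%nat -> is_star (vsub (xs k) x) (J k)) ->
  (forall z, Un_cv (fun k => J k z) 0) -> Delta_conv xs x.
Proof.
  intros [N HN] HJ0 y eps Heps. destruct (HJ0 (vsub y x) eps Heps) as [N1 HN1].
  exists (max N N1). intros k Hk.
  pose proof (HN k ltac:(lia)) as Hstar.
  pose proof (Req_le _ _ (is_star_dual_norm _ _ Hstar)) as HJ1. destruct Hstar as [HJd [_ HJv]].
  specialize (HN1 k ltac:(lia)). unfold R_dist in HN1. rewrite Rminus_0_r in HN1.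
  apply Rabs_def2 in HN1.
  pose proof (dual_norm_le1_bound (J k) (vsub (xs k) y) HJd HJ1) as Q.
  rewrite linear_sub in Q, HJv, HN1 by apply HJd.
  lra.
Qed.

End SupportFunctionals.

Lemma reflexive_weakly_to_zero_dual_iff (X : NormedSpace) (J : nat -> X -> R) :
  reflexive X -> (exists N, forall k, (k >= N)%nat -> in_dual (J k)) ->
  weakly_to_zero_dual J <-> forall z, Un_cv (fun k => J k z) 0.
Proof.
  intros Hrefl [N HN]. split.
  - intros HW z. apply (HW _ (in_bidual_eval z)).
  - intros HJ0 Psi HP. destruct (Hrefl Psi HP) as [z Hz]. intros eps He.
    destruct (HJ0 z eps He) as [N1 HN1]. exists (max N N1). intros k Hk.
    rewrite Hz by (apply HN; lia). apply HN1. lia.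
Qed.

Theorem theorem3p8 (X : NormedSpace) (HB : is_Banach X)
  (Hconv : uniformly_convex X) (Hsmooth : uniformly_smooth X)
  (x : X) (xs : nat -> X) (Hbdd : bounded_seq xs) (Hlim : liminf_dist_pos xs x)
  (J : nat -> X -> R)
  (HJ : exists N, forall k, (k >= N)%nat -> is_star (vsub (xs k) x) (J k)) :
  Delta_conv xs x <-> weakly_to_zero_dual J.
Proof.
  assert (HJd : exists N, forall k, (k >= N)%nat -> in_dual (J k)).
  { destruct HJ as [N HN]. exists N. intros k Hk. apply (HN k Hk). }
  rewrite (reflexive_weakly_to_zero_dual_iff X J
             (uniformly_convex_smooth_reflexive X HB Hconv Hsmooth) HJd).
  split; [apply Delta_conv_support_vanish | apply support_vanish_Delta_conv]; assumption.
Qed.
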